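(* Let $\mathfrak s=\mathfrak{osp}(1|2)$ with even generators $\mathtt e,\mathtt f,\mathtt h$ and odd generators $\mathtt p,\mathtt q$, subject to $[\mathtt h,\mathtt e]=2\mathtt e$, $[\mathtt h,\mathtt f]=-2\mathtt f$, $[\mathtt e,\mathtt f]=\mathtt h$, $[\mathtt h,\mathtt p]=\mathtt p$, $[\mathtt h,\mathtt q]=-\mathtt q$, $\mathtt p^2=\mathtt e$, $\mathtt q^2=-\mathtt f$, $\mathtt p\mathtt q+\mathtt q\mathtt p=\mathtt h$, and let $\Sigma:=\mathtt p\mathtt q-\mathtt q\mathtt p+\frac12\in U(\mathfrak s)$. Let $\Bbbk=\mathbb{C}(\mathtt h)$, let $\sigma_1$ be the automorphism of $\Bbbk$ which is the identity on $\mathbb C$ and sends $\mathtt h\mapsto \mathtt h-1$, and let $R_1:=\Bbbk[x,x^{-1},\sigma_1]$ be the skew Laurent polynomial algebra (basis $x^i$, $i\in\mathbb Z$, with $x^ix^j=x^{i+j}$ and $xr=\sigma_1(r)x$ for $r\in\Bbbk$). For $u\in\Bbbk^\times$, let $N_u$ be the $R_1$-module structure on $\Bbbk$ given by $x\cdot b=\sigma_1(b)u$. For $\lambda\in\mathbb C$, let $M_{u,\lambda}:=N_u\oplus N_u$ (even $\oplus$ odd) with \[ \mathtt h\mapsto \mathtt h\,I_2,\qquad \mathtt p\mapsto \begin{pmatrix}0&x\\ x&0\end{pmatrix},\qquad \mathtt q\mapsto \begin{pmatrix}0&\frac{\mathtt h-\lambda}{2}\,x^{-1}\\[2pt] \frac{\mathtt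 h+\lambda+1}{2}\,x^{-1}&0\end{pmatrix}. \] Then: (a) This assignment defines on $M_{u,\lambda}$ the structure of a $\mathbb{Z}_2$-graded $U(\mathfrak s)$-module. (b) The element $\Sigma$ acts on $M_{u,\lambda}$ as $(\lambda+\frac12)\mathrm{diag}(1,-1)$; in particular, $\Sigma^2$ acts as $(\lambda+\tfrac12)^2\cdot\mathrm{Id}_{M_{u,\lambda}}$. (c) For the $\mathfrak{sl}_2$-Casimir $\mathtt c:=(\mathtt h+1)^2+4\mathtt f\mathtt e=(\mathtt h-1)^2+4\mathtt e\mathtt f$ (with $\mathtt e=\mathtt p^2$ and $\mathtt f=-\mathtt q^2$) one has \[ \mathtt c|_{(M_{u,\lambda})_{\bar0}}=(\lambda+1)^2,\qquad \mathtt c|_{(M_{u,\lambda})_{\bar1}}=\lambda^2 . \]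
   Context: Work over $\mathbb C$. The Lie superalgebra $\mathfrak s=\mathfrak{osp}(1|2)$, the SCasimir element $\Sigma$, the field $\Bbbk=\mathbb C(\mathtt h)$ (considered purely even), the automorphism $\sigma_1(\mathtt h)=\mathtt h-1$, the skew Laurent polynomial algebra $R_1$, and the modules $N_u$, $M_{u,\lambda}$ are as defined in the claim. *)

From mathcomp Require Import all_boot all_algebra.
From mathcomp Require Import complex reals.
Set Implicit Arguments. Unset Strict Implicit. Unset Printing Implicit Defensive.
Import GRing.Theory.
Local Open Scope ring_scope.
Local Open Scope quotient_scope.

Section Defs.
Variable R : realType.
Local Notation C := (R[i]).

Definition kk : fieldType := {fraction {poly C}}.
Definition cst (c : C) : kk := FracField.tofrac (c%:P).
Definition hh : kk := FracField.tofrac ('X : {poly C}).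

(* the C-automorphism of k sending h to h + t (well defined on fractions:
   substitute h -> h + t in numerator and denominator of a representative) *)
Definition shift (t : C) (b : kk) : kk :=
  let r := repr (b : {fraction {poly C}}) in
  FracField.tofrac (\n_r \Po ('X + t%:P)) / FracField.tofrac (\d_r \Po ('X + t%:P)).

Definition sigma1 : kk -> kk := shift (-1).
Definition sigma1inv : kk -> kk := shift 1.

(* the R_1-module N_u: x . b = sigma_1(b) u, hence x^{-1} . b = sigma_1^{-1}(b u^{-1}) *)
Definition x_act (u : kk) (b : kk) : kk := sigma1 b * u.
Definition xinv_act (u : kk) (b : kk) : kk := sigma1inv (b / u).

(* M_{u,lam} = N_u (+) N_u : first component even, second odd *)
Definition Mod : Type := (kk * kk)%type.

Definition csc (c : C) (v : kk * kk) : kk * kk := (cst c * v.1, cst c * v.2).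

Definition Clinear (A : kk * kk -> kk * kk) : Prop :=
  forall (c : C) (v w : kk * kk), A (csc c v + w) = csc c (A v) + A w.

Definition even_op (A : kk * kk -> kk * kk) : Prop :=
  forall b : kk, (A (b, 0)).2 = 0 /\ (A (0, b)).1 = 0.
Definition odd_op (A : kk * kk -> kk * kk) : Prop :=
  forall b : kk, (A (b, 0)).1 = 0 /\ (A (0, b)).2 = 0.

Definition hM (v : kk * kk) : kk * kk := (hh * v.1, hh * v.2).
Definition pM (u : kk) (v : kk * kk) : kk * kk := (x_act u v.2, x_act u v.1).
Definition qM (u : kk) (lam : C) (v : kk * kk) : kk * kk :=
  ((hh - cst lam) / 2%:R * xinv_act u v.2,
   (hh + cst lam + 1) / 2%:R * xinv_act u v.1).

Definition eM (u : kk) (v : kk * kk) : kk * kk := pM u (pM u v).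
Definition fM (u : kk) (lam : C) (v : kk * kk) : kk * kk := - qM u lam (qM u lam v).

Definition SigmaM (u : kk) (lam : C) (v : kk * kk) : kk * kk :=
  pM u (qM u lam v) - qM u lam (pM u v) + csc (1 / 2%:R) v.

Definition casM1 (u : kk) (lam : C) (v : kk * kk) : kk * kk :=
  hM (hM v) + hM v *+ 2 + v + fM u lam (eM u v) *+ 4.
Definition casM2 (u : kk) (lam : C) (v : kk * kk) : kk * kk :=
  hM (hM v) - hM v *+ 2 + v + eM u (fM u lam v) *+ 4.

End Defs.

From HB Require Import structures.
From mathcomp Require Import all_boot all_algebra.
From mathcomp Require Import complex reals ring.
Import GRing.Theory.
Local Open Scope ring_scope.
Local Open Scope quotient_scope.

(* On N_u the operator x is sigma_1-semilinear, x (r b) = sigma_1(r) (x b), and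
   x^-1 is sigma_1^-1-semilinear.  In the products pq and qp the operators x and
   x^-1 cancel, so both act diagonally by multiplication by elements of k:
     qp = diag((h - lam)/2, (h + lam + 1)/2),  pq = diag((h + lam)/2, (h - lam - 1)/2).
   This gives pq + qp = h and Sigma = (lam + 1/2) diag(1,-1) at once, while
   [h,p] = p and [h,q] = -q come from sigma_1(h) = h - 1.  The even relations
   then follow from the odd ones for any additive operators; e.g.
   [p^2, q^2] = p [p,q^2] + [p,q^2] p with [p,q^2] = [h,q] = -q.  Finally
   fe = -q (qp) p is diagonal again, which computes the Casimir, and its second
   form differs from the first by 4([e,f] - h) = 0. *)

Local Notation tf := FracField.tofrac.

Lemma subf_div (F : fieldType) (x1 y1 x2 y2 : F) : y1 != 0 -> y2 != 0 ->
  x1 / y1 - x2 / y2 = (x1 * y2 - x2 * y1) / (y1 * y2).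
Proof. by move=> y1_neq0 y2_neq0; rewrite -mulNr addf_div // mulNr. Qed.

Section FractionRepresentatives.
Variable K : idomainType.

Lemma tofrac_div_numden (b : {fraction K}) :
  b = tf (\n_(repr b)) / tf (\d_(repr b)).
Proof.
have dn := denom_ratioP (repr b).
apply: (canRL (mulfK _)); first by rewrite tofrac_eq0.
rewrite -{1}[b]reprK; unlock FracField.tofrac.
rewrite -[LHS]FracField.pi_mul; apply/eqmodP.
rewrite /= FracField.equivfE /FracField.mulf /=.
by rewrite !numden_Ratio ?mulf_neq0 ?oner_neq0 // !mulr1 mulrC.
Qed.

Lemma fraction_ind (P : {fraction K} -> Prop) :
  (forall n d, d != 0 -> P (tf n / tf d)) -> forall b, P b.
Proof. by move=> Pnd b; rewrite [b]tofrac_div_numden; apply/Pnd/denom_ratioP. Qed.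

Lemma tofrac_div_eq (a b c d : K) :
  b != 0 -> d != 0 -> a * d = c * b -> tf a / tf b = tf c / tf d :> {fraction K}.
Proof.
move=> b0 d0 adcb.
by apply/eqP; rewrite eqr_div ?tofrac_eq0 // -!tofracM adcb.
Qed.

End FractionRepresentatives.

Section Shift.
Variables (R : realType) (t : R[i]).
Local Notation shiftp p := (p \Po ('X + t%:P)).
Local Notation phi p := (tf (shiftp p) : kk R).

Lemma shiftp_eq0 (p : {poly R[i]}) : (shiftp p == 0) = (p == 0).
Proof. by rewrite comp_poly_eq0 // size_XaddC. Qed.

Lemma tofrac_shiftp_neq0 (p : {poly R[i]}) : p != 0 -> phi p != 0.
Proof. by rewrite tofrac_eq0 shiftp_eq0. Qed.

Lemma shift_frac (n d : {poly R[i]}) : d != 0 ->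
  shift t (tf n / tf d) = phi n / phi d.
Proof.
move=> d0; rewrite /shift; set b := tf n / tf d.
have rb0 := denom_ratioP (repr b).
apply: tofrac_div_eq; rewrite ?shiftp_eq0 // -!comp_polyM; congr (_ \Po _).
apply/eqP; rewrite -tofrac_eq !tofracM -eqr_div ?tofrac_eq0 //.
by rewrite -tofrac_div_numden.
Qed.

Lemma shift_tofrac (p : {poly R[i]}) : shift t (tf p) = phi p.
Proof.
by rewrite -[tf p]divr1 -tofrac1 shift_frac ?oner_neq0 // comp_polyC tofrac1 divr1.
Qed.

Lemma shift_is_zmod_morphism : zmod_morphism (shift t).
Proof.
elim/fraction_ind => na da da0; elim/fraction_ind => nb db db0.
rewrite subf_div ?tofrac_eq0 // -!tofracM -tofracB !shift_frac ?mulf_neq0 //.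
by rewrite subf_div ?tofrac_shiftp_neq0 // comp_polyB !comp_polyM tofracB !tofracM.
Qed.

Lemma shift_is_monoid_morphism : monoid_morphism (shift t).
Proof.
split; first by rewrite -tofrac1 shift_tofrac comp_polyC.
elim/fraction_ind => na da da0; elim/fraction_ind => nb db db0.
rewrite mulf_div -!tofracM !shift_frac ?mulf_neq0 // !comp_polyM !tofracM.
by rewrite mulf_div.
Qed.

HB.instance Definition _ :=
  GRing.isZmodMorphism.Build (kk R) (kk R) (shift t) shift_is_zmod_morphism.
HB.instance Definition _ :=
  GRing.isMonoidMorphism.Build (kk R) (kk R) (shift t) shift_is_monoid_morphism.

Lemma shift_cst (c : R[i]) : shift t (cst c) = cst c.
Proof. by rewrite shift_tofrac comp_polyC. Qed.

End Shift.

Lemma shift_shift (R : realType) (s t : R[i]) (b : kk R) :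
  shift s (shift t b) = shift (s + t) b.
Proof.
elim/fraction_ind: b => n d d0.
rewrite [shift t _]shift_frac // !shift_frac ?shiftp_eq0 //.
rewrite -!comp_polyA comp_polyD comp_polyX comp_polyC.
by rewrite polyCD addrA.
Qed.

Lemma shift0 (R : realType) (b : kk R) : shift 0 b = b.
Proof.
by elim/fraction_ind: b => n d d0; rewrite shift_frac // addr0 !comp_polyXr.
Qed.

Section Sigma1.
Variable R : realType.
Local Notation kk := (kk R).
Local Notation hh := (hh R).

Lemma cst_is_zmod_morphism : zmod_morphism (@cst R).
Proof. by move=> a b; rewrite /cst polyCB tofracB. Qed.
Lemma cst_is_monoid_morphism : monoid_morphism (@cst R).
Proof. by split=> [|a b]; rewrite /cst ?tofrac1 // polyCM tofracM. Qed.
HB.instance Definition _ :=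
  GRing.isZmodMorphism.Build R[i] kk (@cst R) cst_is_zmod_morphism.
HB.instance Definition _ :=
  GRing.isMonoidMorphism.Build R[i] kk (@cst R) cst_is_monoid_morphism.

HB.instance Definition _ := GRing.isZmodMorphism.Build kk kk (@sigma1 R)
  (@shift_is_zmod_morphism R (-1)).
HB.instance Definition _ := GRing.isMonoidMorphism.Build kk kk (@sigma1 R)
  (@shift_is_monoid_morphism R (-1)).
HB.instance Definition _ := GRing.isZmodMorphism.Build kk kk (@sigma1inv R)
  (@shift_is_zmod_morphism R 1).
HB.instance Definition _ := GRing.isMonoidMorphism.Build kk kk (@sigma1inv R)
  (@shift_is_monoid_morphism R 1).

Lemma sigma1K : cancel (@sigma1inv R) (@sigma1 R).
Proof. by move=> b; rewrite /sigma1 /sigma1inv shift_shift addNr shift0. Qed.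
Lemma sigma1invK : cancel (@sigma1 R) (@sigma1inv R).
Proof. by move=> b; rewrite /sigma1 /sigma1inv shift_shift addrN shift0. Qed.

Lemma sigma1_cst c : sigma1 (cst c) = cst c :> kk. Proof. exact: shift_cst. Qed.
Lemma sigma1inv_cst c : sigma1inv (cst c) = cst c :> kk. Proof. exact: shift_cst. Qed.

Lemma shift_hh t : shift t hh = hh + cst t.
Proof. by rewrite shift_tofrac comp_polyX tofracD. Qed.

Lemma sigma1_hh : sigma1 hh = hh - 1.
Proof. by rewrite /sigma1 shift_hh rmorphN rmorph1. Qed.
Lemma sigma1inv_hh : sigma1inv hh = hh + 1.
Proof. by rewrite /sigma1inv shift_hh rmorph1. Qed.

Lemma two_neq0 : 2%:R != 0 :> kk.
Proof. by rewrite -(rmorph_nat (@cst R)) fmorph_eq0 Num.Theory.pnatr_eq0. Qed.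

End Sigma1.

Section EvenRelationsFromOdd.
Context {V : zmodType} {H P Q : {additive V -> V}}.
Hypothesis comm_H_P : forall v, H (P v) - P (H v) = P v.
Hypothesis comm_H_Q : forall v, H (Q v) - Q (H v) = - Q v.
Hypothesis anticomm_P_Q : forall v, P (Q v) + Q (P v) = H v.
Local Notation E v := (P (P v)).
Local Notation F v := (- Q (Q v)).

Lemma HPE v : H (P v) = P v + P (H v).
Proof. by apply/eqP; rewrite -subr_eq comm_H_P. Qed.
Lemma HQE v : H (Q v) = Q (H v) - Q v.
Proof. by apply/eqP; rewrite addrC -subr_eq comm_H_Q. Qed.
Lemma PQE v : P (Q v) = H v - Q (P v).
Proof. by rewrite -anticomm_P_Q addrK. Qed.

Lemma comm_H_E v : H (E v) - E (H v) = E v *+ 2.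
Proof. by rewrite HPE HPE raddfD addrA addrK mulr2n. Qed.

Lemma comm_H_F v : H (F v) - F (H v) = - (F v *+ 2).
Proof.
by rewrite raddfN HQE HQE raddfB mulNrn !opprK opprB opprB addrA subrK mulr2n.
Qed.

Lemma comm_P_Q2 v : P (Q (Q v)) - Q (Q (P v)) = - Q v.
Proof. by rewrite PQE [P (Q v)]PQE raddfB opprB addrA addrAC addrK comm_H_Q. Qed.

Lemma comm_E_F v : E (F v) - F (E v) = H v.
Proof.
have PQQ w : P (Q (Q w)) = Q (Q (P w)) - Q w by rewrite -comm_P_Q2 addrC subrK.
by rewrite !raddfN PQQ raddfB PQQ opprK addrC -addrA -opprD subKr addrC anticomm_P_Q.
Qed.

End EvenRelationsFromOdd.

Section Module.
Variables (R : realType) (u : kk R) (lam : R[i]).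
Hypothesis u_neq0 : u != 0.
Local Notation hh := (hh R).
Local Notation p := (pM u).
Local Notation q := (qM u lam).

Lemma Clinear_zmod_morphism (A : kk R * kk R -> kk R * kk R) :
  Clinear A -> zmod_morphism A.
Proof.
move=> linA v w; have := linA (-1) w v.
have csc_N1 x : csc (-1) x = - x.
  by case: x => a b; rewrite /csc rmorphN1 !mulN1r.
by rewrite !csc_N1 addrC => ->; rewrite addrC.
Qed.

Lemma hM_Clinear : Clinear (@hM R).
Proof. by move=> c [a b] [a' b']; apply: injective_projections => /=; ring. Qed.

Lemma pM_Clinear : Clinear p.
Proof.
move=> c [a b] [a' b']; apply: injective_projections => /=;
  by rewrite /x_act rmorphD rmorphM /= sigma1_cst; ring.
Qed.

Lemma qM_Clinear : Clinear q.
Proof.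
move=> c [a b] [a' b']; apply: injective_projections => /=;
  rewrite /xinv_act [(_ + _) / u]mulrDl -[cst c * _ / u]mulrA;
  by rewrite rmorphD rmorphM /= sigma1inv_cst; ring.
Qed.

HB.instance Definition _ :=
  GRing.isZmodMorphism.Build _ _ (@hM R) (Clinear_zmod_morphism _ hM_Clinear).
HB.instance Definition _ :=
  GRing.isZmodMorphism.Build _ _ p (Clinear_zmod_morphism _ pM_Clinear).
HB.instance Definition _ :=
  GRing.isZmodMorphism.Build _ _ q (Clinear_zmod_morphism _ qM_Clinear).

Lemma hM_even : even_op (@hM R).
Proof. by move=> b; rewrite /= mulr0. Qed.

Lemma pM_odd : odd_op p.
Proof. by move=> b; rewrite /= /x_act rmorph0 mul0r. Qed.

Lemma qM_odd : odd_op q.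
Proof. by move=> b; rewrite /= /xinv_act mul0r rmorph0 !mulr0. Qed.

Lemma qM_mul a b v : q ((a, b) * v) = (sigma1inv b, sigma1inv a) * q v.
Proof.
case: v => c d; apply: injective_projections => /=;
  by rewrite /xinv_act -mulrA rmorphM /=; ring.
Qed.

Lemma qM_pM v : q (p v) = ((hh - cst lam) / 2%:R, (hh + cst lam + 1) / 2%:R) * v.
Proof.
by case: v => a b; apply: injective_projections => /=;
  rewrite /xinv_act /x_act mulfK // sigma1invK.
Qed.

Lemma pM_qM v : p (q v) = ((hh + cst lam) / 2%:R, (hh - cst lam - 1) / 2%:R) * v.
Proof.
case: v => a b; apply: injective_projections => /=;
  rewrite /x_act /xinv_act rmorphM /= sigma1K -mulrA divfK //.
- by rewrite !(rmorphM, rmorphD, fmorphV, rmorph_nat, rmorph1) /= sigma1_hh sigma1_cst; ring.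
- by rewrite !(rmorphM, rmorphB, fmorphV, rmorph_nat, rmorph1) /= sigma1_hh sigma1_cst; ring.
Qed.

Lemma comm_hM_pM v : hM (p v) - p (hM v) = p v.
Proof.
case: v => a b; apply: injective_projections => /=;
  by rewrite /x_act rmorphM /= sigma1_hh; ring.
Qed.

Lemma comm_hM_qM v : hM (q v) - q (hM v) = - q v.
Proof.
case: v => a b; apply: injective_projections => /=;
  by rewrite /xinv_act -[_ * _ / u]mulrA !rmorphM /= sigma1inv_hh; ring.
Qed.

Lemma anticomm_pM_qM v : p (q v) + q (p v) = hM v.
Proof.
rewrite pM_qM qM_pM; case: v => a b; apply: injective_projections => /=;
  by field; rewrite two_neq0.
Qed.

Lemma comm_hM_eM v : hM (eM u v) - eM u (hM v) = eM u v *+ 2.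
Proof. exact: comm_H_E comm_hM_pM v. Qed.

Lemma comm_hM_fM v : hM (fM u lam v) - fM u lam (hM v) = - (fM u lam v *+ 2).
Proof. exact: comm_H_F comm_hM_qM v. Qed.

Lemma comm_eM_fM v : eM u (fM u lam v) - fM u lam (eM u v) = hM v.
Proof. exact: comm_E_F comm_hM_qM anticomm_pM_qM v. Qed.

Lemma SigmaM_diag v : SigmaM u lam v = csc (lam + 1 / 2%:R) (v.1, - v.2).
Proof.
rewrite /SigmaM pM_qM qM_pM; case: v => a b; apply: injective_projections => /=;
  by rewrite !(rmorphD, rmorphM, fmorphV, rmorph_nat, rmorph1); field; rewrite two_neq0.
Qed.

Lemma SigmaM_sqr v : SigmaM u lam (SigmaM u lam v) = csc ((lam + 1 / 2%:R) ^+ 2) v.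
Proof.
rewrite !SigmaM_diag; case: v => a b; apply: injective_projections => /=;
  by rewrite rmorphXn; ring.
Qed.

Lemma fM_eM v : fM u lam (eM u v) =
  - (((hh + cst lam + 2%:R) / 2%:R * ((hh - cst lam) / 2%:R),
      (hh - cst lam + 1) / 2%:R * ((hh + cst lam + 1) / 2%:R)) * v).
Proof.
rewrite /fM /eM qM_pM qM_mul qM_pM mulrA; congr (- (_ * _)).
apply: injective_projections => /=;
  rewrite !(rmorphM, rmorphD, rmorphN, fmorphV, rmorph_nat, rmorph1) /=;
  by rewrite sigma1inv_hh sigma1inv_cst; ring.
Qed.

Lemma casM1_diag v : casM1 u lam v = (cst ((lam + 1) ^+ 2), cst (lam ^+ 2)) * v.
Proof.
rewrite /casM1 fM_eM; case: v => a b; apply: injective_projections => /=;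
  by rewrite !(rmorphXn, rmorphD, rmorph1); field; rewrite two_neq0.
Qed.

Lemma casM2_casM1 v : casM2 u lam v = casM1 u lam v.
Proof.
have efE : eM u (fM u lam v) = fM u lam (eM u v) + hM v.
  by rewrite -comm_eM_fM addrC subrK.
by rewrite /casM2 /casM1 efE; ring.
Qed.

Lemma casM1_even b : casM1 u lam (b, 0) = csc ((lam + 1) ^+ 2) (b, 0).
Proof. by rewrite casM1_diag; apply: injective_projections => /=; rewrite ?mulr0. Qed.

Lemma casM1_odd b : casM1 u lam (0, b) = csc (lam ^+ 2) (0, b).
Proof. by rewrite casM1_diag; apply: injective_projections => /=; rewrite ?mulr0. Qed.

End Module.

Theorem lemma21 (R : realType) (u : kk R) (lam : R[i]) :
  u != 0 ->
  let h := @hM R in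
  let p := pM u in
  let q := qM u lam in
  let e := eM u in
  let f := fM u lam in
  (* (a) Z_2-graded U(osp(1|2))-module structure: C-linear operators of the
     right parity satisfying the defining relations of U(osp(1|2)) *)
  ((Clinear h /\ Clinear p /\ Clinear q) /\
   (even_op h /\ odd_op p /\ odd_op q) /\
   (forall v, h (e v) - e (h v) = e v *+ 2) /\
   (forall v, h (f v) - f (h v) = - (f v *+ 2)) /\
   (forall v, e (f v) - f (e v) = h v) /\
   (forall v, h (p v) - p (h v) = p v) /\
   (forall v, h (q v) - q (h v) = - q v) /\
   (forall v, p (q v) + q (p v) = h v)) /\
  (* (b) Sigma acts as (lam + 1/2) diag(1,-1), Sigma^2 as (lam+1/2)^2 Id *)
  (forall v : kk R * kk R,
     SigmaM u lam v = csc (lam + 1 / 2%:R) (v.1, - v.2)) /\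
  (forall v : kk R * kk R,
     SigmaM u lam (SigmaM u lam v) = csc ((lam + 1 / 2%:R) ^+ 2) v) /\
  (* (c) the sl_2 Casimir on the even and odd parts, in both forms *)
  (forall b : kk R,
     casM1 u lam (b, 0) = csc ((lam + 1) ^+ 2) (b, 0) /\
     casM2 u lam (b, 0) = csc ((lam + 1) ^+ 2) (b, 0) /\
     casM1 u lam (0, b) = csc (lam ^+ 2) (0, b) /\
     casM2 u lam (0, b) = csc (lam ^+ 2) (0, b)).
Proof.
move=> u_neq0 h p q e f; rewrite {}/h {}/p {}/q {}/e {}/f.
repeat match goal with |- _ /\ _ => split end.
- exact: hM_Clinear.
- exact: pM_Clinear.
- exact: qM_Clinear.
- exact: hM_even.
- exact: pM_odd.
- exact: qM_odd.
- exact: comm_hM_eM.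
- exact: comm_hM_fM.
- exact: comm_eM_fM.
- exact: comm_hM_pM.
- exact: comm_hM_qM.
- exact: anticomm_pM_qM.
- exact: SigmaM_diag.
- exact: SigmaM_sqr.
- by move=> b; rewrite !casM2_casM1 // casM1_even // casM1_odd.
Qed.
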